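(* Let $\mathcal{K}=(\mathcal{R},\mathcal{T})$ be an ME-consistent $\mathcal{ALCP}$ knowledge base over $\mathcal{L}$, let $C,D$ be concepts, let $\phi\in\mathcal{L}$ be a consequence formula for $C\sqsubseteq D$ w.r.t. $\mathcal{T}$, let $\psi\in\mathcal{L}$ be a consequence formula for the strong non-subsumption of $C$ by $D$ w.r.t. $\mathcal{T}$, and let $\kappa\in\mathcal{L}$. Then $\mathcal{B}^{s}_{\mathcal{K}}(C\sqsubseteq D\mid\kappa)=P^{ME}_{\mathcal{R}}(\phi\mid\kappa)$ and $\mathcal{B}^{c}_{\mathcal{K}}(C\sqsubseteq D\mid\kappa)=1-P^{ME}_{\mathcal{R}}(\psi\mid\kappa)$.
   Context: $\mathcal{L}$ is a propositional language over a finite set of variables; $\mathrm{Int}(\mathcal{L})$ is the set of truth assignments. A probability distribution over $\mathcal{L}$ is $P:\mathrm{Int}(\mathcal{L})\to[0,1]$ summing to $1$, with $P(\phi)=\sum_{v\models\phi}P(v)$ and $P(\phi\mid\kappa)=P(\phi\wedge\kappa)/P(\kappa)$. A probabilistic constraint is $c_0+\sum_{i=1}^k c_i\,\mathsf{p}(\phi_i)\ge 0$ ($c_i\in\mathbb{R}$, $\phi_i\in\mathcal{L}$), satisfied by $P$ iff $c_0+\sum_ic_iP(\phi_i)\ge0$; $\mathrm{Mod}(\mathcal{R})$ is the set of distributions satisfying all constraints in $\mathcal{R}$; for consistent $\mathcal{R}$, $P^{ME}_{\mathcal{R}}$ is the unique maximizer in $\mathrm{Mod}(\mathcal{R})$ of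 $H(P)=-\sum_vP(v)\log P(v)$. Concepts: $C::=A\mid\neg C\mid C\sqcap C\mid\exists r.C$. An $\mathcal{L}$-GCI is $\langle C\sqsubseteq D:\kappa\rangle$, $\kappa\in\mathcal{L}$; an $\mathcal{L}$-TBox is a finite set of them; a KB is $\mathcal{K}=(\mathcal{R},\mathcal{T})$. A possible world $\mathcal{I}=(\Delta^{\mathcal{I}},\cdot^{\mathcal{I}},v^{\mathcal{I}})$ is a classical $\mathcal{ALC}$ interpretation together with $v^{\mathcal{I}}\in\mathrm{Int}(\mathcal{L})$; it models $\langle C\sqsubseteq D:\kappa\rangle$ iff $v^{\mathcal{I}}\not\models\kappa$ or $C^{\mathcal{I}}\subseteq D^{\mathcal{I}}$. For $w\in\mathrm{Int}(\mathcal{L})$, $\mathcal{T}_w=\{C\sqsubseteq D\mid\langle C\sqsubseteq D:\kappa\rangle\in\mathcal{T}, w\models\kappa\}$; $\mathcal{T}_w\models C\sqsubseteq D$ means $C^{\mathcal{I}}\subseteq D^{\mathcal{I}}$ in every classical interpretation satisfying all inclusions of $\mathcal{T}_w$; $C$ is strongly non-subsumed by $D$ w.r.t. $\mathcal{T}_w$ iff $C^{\mathcal{I}}\not\subseteq D^{\mathcal{I}}$ in every such interpretation. A formula $\phi$ is a consequence formula for $C\sqsubseteq D$ (resp. for strong non-subsumption of $C$ by $D$) w.r.t. $\mathcal{T}$ iff for every $w\in\mathrm{Int}(\mathcal{L})$: $w\models\phi$ iff $\mathcal{T}_w\models C\sqsubseteq D$ (resp. iff $C$ is strongly non-subsumed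 by $D$ w.r.t. $\mathcal{T}_w$). An $\mathcal{ALCP}$-interpretation $\mathcal{P}=(\mathfrak{I},P_{\mathfrak{I}})$ is a nonempty finite set of possible worlds with a probability distribution on it; $P^{\mathcal{P}}(v)=\sum_{\mathcal{I}\in\mathfrak{I},v^{\mathcal{I}}=v}P_{\mathfrak{I}}(\mathcal{I})$. $\mathcal{P}$ is an ME-$\mathcal{ALCP}$-model of $\mathcal{K}$ iff all its worlds model every GCI of $\mathcal{T}$ and $P^{\mathcal{P}}=P^{ME}_{\mathcal{R}}$; $\mathrm{Mod}_{ME}(\mathcal{K})$ is the set of these; $\mathcal{K}$ is ME-consistent iff it is nonempty. $\Pr_{\mathcal{P}}(C\sqsubseteq D\mid\kappa)=\big(\sum_{\mathcal{I}\in\mathfrak{I},v^{\mathcal{I}}\models\kappa,C^{\mathcal{I}}\subseteq D^{\mathcal{I}}}P_{\mathfrak{I}}(\mathcal{I})\big)/\big(\sum_{\mathcal{I}\in\mathfrak{I},v^{\mathcal{I}}\models\kappa}P_{\mathfrak{I}}(\mathcal{I})\big)$. $\mathcal{B}^{s}_{\mathcal{K}}(C\sqsubseteq D\mid\kappa)$ and $\mathcal{B}^{c}_{\mathcal{K}}(C\sqsubseteq D\mid\kappa)$ are the infimum and supremum of $\Pr_{\mathcal{P}}(C\sqsubseteq D\mid\kappa)$ over $\mathcal{P}\in\mathrm{Mod}_{ME}(\mathcal{K})$. *)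

From HB Require Import structures.
From mathcomp Require Import all_boot all_order all_algebra.
From mathcomp Require Import classical_sets boolp reals exp.
From Stdlib Require List.
Set Implicit Arguments. Unset Strict Implicit. Unset Printing Implicit Defensive.
Import Order.TTheory GRing.Theory Num.Theory.
Local Open Scope ring_scope.
Local Open Scope classical_set_scope.

Inductive lform (V : Type) : Type :=
| FVar of V
| FTop
| FBot
| FNeg of lform V
| FAnd of lform V & lform V
| FOr of lform V & lform V
| FImp of lform V & lform V.

Definition IntL (V : finType) := {ffun V -> bool}.

Fixpoint fsat (V : finType) (w : IntL V) (f : lform V) : bool :=
  match f with
  | FVar x => w x
  | FTop => true
  | FBot => false
  | FNeg g => ~~ fsat w g
  | FAnd g h => fsat w g && fsat w h
  | FOr g h => fsat w g || fsat w h
  | FImp g h => fsat w g ==> fsat w h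
  end.

Section Prob.
Variables (R : realType) (V : finType).

Definition is_distr (P : IntL V -> R) : Prop :=
  (forall v, 0 <= P v) /\ \sum_(v : IntL V) P v = 1.

Definition Pf (P : IntL V -> R) (f : lform V) : R :=
  \sum_(v : IntL V | fsat v f) P v.

Definition condP (P : IntL V -> R) (f k : lform V) : R :=
  Pf P (FAnd f k) / Pf P k.

Record constraint := Constraint {
  c_const : R ;
  c_terms : seq (R * lform V) }.

Definition sat_constraint (P : IntL V -> R) (c : constraint) : Prop :=
  0 <= c_const c + \sum_(t <- c_terms c) t.1 * Pf P t.2.

Definition Mod (KR : seq constraint) : set (IntL V -> R) :=
  [set P | is_distr P /\ forall c, List.In c KR -> sat_constraint P c].

(* entropy, with the convention 0 log 0 = 0 (ln 0 = 0 in mathcomp-analysis) *)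
Definition entropy (P : IntL V -> R) : R :=
  - \sum_(v : IntL V) P v * ln (P v).

Definition is_ME (KR : seq constraint) (P : IntL V -> R) : Prop :=
  Mod KR P /\ forall Q, Mod KR Q -> entropy Q <= entropy P.

End Prob.

Inductive concept (NC NR : Type) : Type :=
| CAtom of NC
| CNeg of concept NC NR
| CAnd of concept NC NR & concept NC NR
| CEx of NR & concept NC NR.

Record interp (NC NR : Type) := Interp {
  dom : Type ;
  dom_inhabited : dom ;
  conc_int : NC -> set dom ;
  role_int : NR -> dom -> dom -> Prop }.

Section CSem.
Variables (NC NR : Type) (I : interp NC NR).
Fixpoint csem (C : concept NC NR) : set (dom I) :=
  match C with
  | CAtom A => @conc_int NC NR I A
  | CNeg C' => ~` csem C'
  | CAnd C1 C2 => csem C1 `&` csem C2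
  | CEx r C' => [set x | exists y, @role_int NC NR I r x y /\ csem C' y]
  end.
End CSem.
Arguments csem {NC NR} I C.

(* L-TBox: finite set of L-GCIs <C [= D : kappa> *)
Definition tbox (NC NR : Type) (V : Type) := seq (concept NC NR * concept NC NR * lform V).

Definition models_Tw (NC NR : Type) (V : finType) (T : tbox NC NR V) (w : IntL V)
    (I : interp NC NR) : Prop :=
  forall g, List.In g T -> fsat w g.2 -> csem I g.1.1 `<=` csem I g.1.2.

Definition Tw_entails (NC NR : Type) (V : finType) (T : tbox NC NR V) (w : IntL V)
    (C D : concept NC NR) : Prop :=
  forall I : interp NC NR, models_Tw T w I -> csem I C `<=` csem I D.

Definition strongly_nonsubsumed (NC NR : Type) (V : finType) (T : tbox NC NR V)
    (w : IntL V) (C D : concept NC NR) : Prop :=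
  forall I : interp NC NR, models_Tw T w I -> ~ (csem I C `<=` csem I D).

Definition consequence_formula (NC NR : Type) (V : finType) (T : tbox NC NR V)
    (C D : concept NC NR) (phi : lform V) : Prop :=
  forall w : IntL V, fsat w phi <-> Tw_entails T w C D.

Definition nonsub_consequence_formula (NC NR : Type) (V : finType) (T : tbox NC NR V)
    (C D : concept NC NR) (psi : lform V) : Prop :=
  forall w : IntL V, fsat w psi <-> strongly_nonsubsumed T w C D.

Record world (NC NR : Type) (V : finType) := World {
  w_int : interp NC NR ;
  w_val : IntL V }.

Definition world_models_gci (NC NR : Type) (V : finType) (W : world NC NR V)
    (g : concept NC NR * concept NC NR * lform V) : Prop :=
  ~~ fsat (w_val W) g.2 \/ csem (w_int W) g.1.1 `<=` csem (w_int W) g.1.2.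

(* a nonempty finite set of possible worlds with a probability distribution;
   the finite set is given as the (injective) image of a finite index type *)
Record alcp_interp (R : realType) (NC NR : Type) (V : finType) := ALCP {
  a_idx : finType ;
  a_world : a_idx -> world NC NR V ;
  a_world_inj : injective a_world ;
  a_prob : a_idx -> R ;
  a_prob_ge0 : forall i, 0 <= a_prob i ;
  a_prob_sum1 : \sum_(i : a_idx) a_prob i = 1 }.
Arguments a_world {R NC NR V} a i.
Arguments a_prob {R NC NR V} a i.

Section ALCP.
Variables (R : realType) (NC NR : Type) (V : finType).

Definition induced_distr (P : alcp_interp R NC NR V) (v : IntL V) : R :=
  \sum_(i : a_idx P | w_val (a_world P i) == v) a_prob P i.

(* ME-ALCP-models of K = (KR, T), where PME is P^ME_KR *)
Definition ME_model (PME : IntL V -> R) (T : tbox NC NR V) (P : alcp_interp R NC NR V) : Prop :=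
  (forall (i : a_idx P) g, List.In g T -> world_models_gci (a_world P i) g) /\
  (forall v, induced_distr P v = PME v).

Definition ME_consistent (PME : IntL V -> R) (T : tbox NC NR V) : Prop :=
  exists P, ME_model PME T P.

Definition PrCond (P : alcp_interp R NC NR V) (C D : concept NC NR) (k : lform V) : R :=
  (\sum_(i : a_idx P) (if fsat (w_val (a_world P i)) k &&
        `[< csem (w_int (a_world P i)) C `<=` csem (w_int (a_world P i)) D >]
        then a_prob P i else 0))
  / (\sum_(i : a_idx P | fsat (w_val (a_world P i)) k) a_prob P i).

Definition PrValues (PME : IntL V -> R) (T : tbox NC NR V) (C D : concept NC NR) (k : lform V)
  : set R :=
  [set r | exists P, ME_model PME T P /\ r = PrCond P C D k].

Definition Bs (PME : IntL V -> R) (T : tbox NC NR V) (C D : concept NC NR) (k : lform V) : R :=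
  inf (PrValues PME T C D k).

Definition Bc (PME : IntL V -> R) (T : tbox NC NR V) (C D : concept NC NR) (k : lform V) : R :=
  sup (PrValues PME T C D k).

End ALCP.

From HB Require Import structures.
From mathcomp Require Import all_boot all_order all_algebra.
From mathcomp Require Import classical_sets boolp reals exp.
Import Order.TTheory GRing.Theory Num.Theory.
Local Open Scope ring_scope.
Local Open Scope classical_set_scope.

(* In an ME-model every world with valuation w satisfies T_w, so worlds whose
   valuation satisfies phi have C [= D and worlds whose valuation satisfies psi
   do not: P(phi | kappa) <= Pr(C [= D | kappa) <= P(~psi | kappa).  An
   ME-model constrains only the distribution of valuations, so the
   interpretation of each world may be replaced by any model of T_w; choosing
   one that refutes C [= D unless phi holds (resp. satisfies it unless psi
   holds) attains each bound. *)

Lemma ler_sum_subpred (R : numDomainType) (I : finType) (P P' : pred I)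
    (F : I -> R) :
  (forall i, 0 <= F i) -> (forall i, P i -> P' i) ->
  \sum_(i | P i) F i <= \sum_(i | P' i) F i.
Proof.
move=> F_ge0 PP'; rewrite [leRHS](bigID P) /=.
under [X in _ <= X + _]eq_bigl => i do rewrite (andb_idl (PP' i)).
by rewrite lerDl sumr_ge0.
Qed.

Lemma inf_attained (R : realType) (E : set R) (x : R) :
  E x -> lbound E x -> inf E = x.
Proof.
move=> Ex xlb; apply/eqP; rewrite eq_le lb_le_inf //; last by exists x.
by rewrite andbT; apply: ge_inf => //; exists x.
Qed.

Lemma sup_attained (R : realType) (E : set R) (x : R) :
  E x -> ubound E x -> sup E = x.
Proof.
move=> Ex xub; apply/eqP; rewrite eq_le ge_sup //; last by exists x.
by apply: ub_le_sup => //; exists x.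
Qed.

Lemma condP_neg (R : realType) (V : finType) (P : IntL V -> R) (f k : lform V) :
  Pf P k != 0 -> condP P (FNeg f) k = 1 - condP P f k.
Proof.
move=> Pk_neq0; apply: (mulIf Pk_neq0); rewrite mulrBl !divfK // mul1r /Pf /=.
under [X in _ - X]eq_bigl => v do rewrite andbC.
rewrite [X in _ = X - _](bigID (fun v => fsat v f)) /= addrAC subrr add0r.
by apply: eq_bigl => v; rewrite andbC.
Qed.

Section WorldSums.
Context {R : realType} {V : finType} {NC NR : Type}.
Context {P : alcp_interp R NC NR V} {PME : IntL V -> R}.
Hypothesis P_PME : forall v, induced_distr P v = PME v.

Local Notation val i := (w_val (a_world P i)).
Local Notation int i := (w_int (a_world P i)).

Lemma sum_prob_val (b : pred (IntL V)) :
  \sum_(i | b (val i)) a_prob P i = \sum_(v | b v) PME v.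
Proof.
rewrite (partition_big (fun i => val i) b) //=.
apply: eq_bigr => v bv; rewrite -P_PME /induced_distr.
by apply: eq_bigl => i; case: eqP => [->|]; rewrite ?bv ?andbF.
Qed.

Lemma Pf_worlds (k : lform V) : Pf PME k = \sum_(i | fsat (val i) k) a_prob P i.
Proof. exact: esym (sum_prob_val (fun v => fsat v k)). Qed.

Lemma Pf_ge0 (k : lform V) : 0 <= Pf PME k.
Proof. by rewrite Pf_worlds sumr_ge0 // => i _; apply: a_prob_ge0. Qed.

Lemma PrCondE (C D : concept NC NR) (k : lform V) :
  PrCond P C D k =
  (\sum_(i | fsat (val i) k && `[< csem (int i) C `<=` csem (int i) D >])
     a_prob P i) / Pf PME k.
Proof. by rewrite /PrCond -big_mkcond Pf_worlds. Qed.

Lemma condPE (f k : lform V) :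
  condP PME f k = (\sum_(i | fsat (val i) f && fsat (val i) k) a_prob P i) / Pf PME k.
Proof. by rewrite /condP Pf_worlds. Qed.

Lemma condP_le_PrCond {C D : concept NC NR} {f k : lform V} :
  (forall i, fsat (val i) k -> fsat (val i) f -> csem (int i) C `<=` csem (int i) D) ->
  condP PME f k <= PrCond P C D k.
Proof.
move=> f_sub; rewrite PrCondE condPE ler_wpM2r ?invr_ge0 ?Pf_ge0 //.
apply: ler_sum_subpred => [i|i /andP[fi ki]]; first exact: a_prob_ge0.
by rewrite ki asboolT //; apply: f_sub.
Qed.

Lemma PrCond_le_condP {C D : concept NC NR} {f k : lform V} :
  (forall i, fsat (val i) k -> csem (int i) C `<=` csem (int i) D -> fsat (val i) f) ->
  PrCond P C D k <= condP PME f k.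
Proof.
move=> sub_f; rewrite PrCondE condPE ler_wpM2r ?invr_ge0 ?Pf_ge0 //.
apply: ler_sum_subpred => [i|i /andP[ki /asboolP sub]]; first exact: a_prob_ge0.
by rewrite ki sub_f.
Qed.

Lemma PrCond_condP {C D : concept NC NR} {f k : lform V} :
  (forall i, fsat (val i) k -> csem (int i) C `<=` csem (int i) D <-> fsat (val i) f) ->
  PrCond P C D k = condP PME f k.
Proof.
move=> sub_f; apply/eqP; rewrite eq_le.
rewrite PrCond_le_condP => [|i ki]; last by case: (sub_f i ki).
by rewrite condP_le_PrCond // => i ki; case: (sub_f i ki).
Qed.

Lemma induced_distr_neq0 (v : IntL V) : PME v != 0 -> exists i, val i = v.
Proof.
rewrite -P_PME /induced_distr => /eqP neq0.
apply: contrapT => no_world; apply: neq0; apply: big_pred0 => i.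
by apply/negbTE/eqP => vi; apply: no_world; exists i.
Qed.

Lemma induced_distr_is_distr : is_distr PME.
Proof.
split=> [v|]; first by rewrite -P_PME sumr_ge0 // => i _; apply: a_prob_ge0.
by rewrite -(sum_prob_val predT) a_prob_sum1.
Qed.

End WorldSums.

Section MEModels.
Context {R : realType} {V : finType} {NC NR : Type}.
Context {PME : IntL V -> R} {T : tbox NC NR V}.

Lemma ME_model_models_Tw {P : alcp_interp R NC NR V} (i : a_idx P) :
  ME_model PME T P -> models_Tw T (w_val (a_world P i)) (w_int (a_world P i)).
Proof. by move=> [P_T _] g Tg gk; case: (P_T i g Tg) => //; rewrite gk. Qed.

Lemma ME_model_support {P : alcp_interp R NC NR V} {v : IntL V} :
  ME_model PME T P -> PME v != 0 -> exists I, models_Tw T v I.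
Proof.
move=> PM /(induced_distr_neq0 PM.2) [i <-].
by exists (w_int (a_world P i)); apply: ME_model_models_Tw.
Qed.

Lemma ME_model_choice (Good : IntL V -> interp NC NR -> Prop) :
  ME_consistent PME T ->
  (forall v, (exists I, models_Tw T v I) -> exists I, models_Tw T v I /\ Good v I) ->
  exists P : alcp_interp R NC NR V, ME_model PME T P /\
    forall i, Good (w_val (a_world P i)) (w_int (a_world P i)).
Proof.
move=> [P0 P0M] good_ex; have [PME_ge0 PME_sum1] := induced_distr_is_distr P0M.2.
pose S : {pred IntL V} := fun v => PME v != 0.
have [I I_good] := choice (fun s : {x in S} =>
  good_ex (val s) (ME_model_support P0M (valP s))).
pose W (s : {x in S}) := World (I s) (val s).
have W_inj : injective W by move=> s1 s2 [_ /val_inj].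
have prob_ge0 (s : {x in S}) : 0 <= PME (val s) by [].
have prob_sum1 : \sum_(s : {x in S}) PME (val s) = 1.
  rewrite -big_sub -PME_sum1 [RHS](bigID S) /= [X in _ + X]big1 ?addr0 //.
  by move=> v /negPn/eqP.
exists (ALCP W_inj prob_ge0 prob_sum1); split=> [|s]; last exact: (I_good s).2.
split=> [s g Tg|v]; rewrite /world_models_gci /=.
  by case: (boolP (fsat (val s) g.2)) => gk; [right; apply: (I_good s).1 | left].
rewrite /induced_distr /=; case: (boolP (v \in S)) => vS.
  by rewrite (big_pred1 (Sub v vS : {x in S})).
rewrite big_pred0; first by move/negPn/eqP: vS.
by move=> s /=; apply/negbTE; apply: contraNneq vS => <-; apply: valP.
Qed.

Context {C D : concept NC NR}.

Lemma ME_model_subsumed {P : alcp_interp R NC NR V} {phi : lform V} (i : a_idx P) :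
  ME_model PME T P -> consequence_formula T C D phi ->
  fsat (w_val (a_world P i)) phi ->
  csem (w_int (a_world P i)) C `<=` csem (w_int (a_world P i)) D.
Proof. by move=> PM phiE /phiE; apply; apply: ME_model_models_Tw. Qed.

Lemma ME_model_not_subsumed {P : alcp_interp R NC NR V} {psi : lform V} (i : a_idx P) :
  ME_model PME T P -> nonsub_consequence_formula T C D psi ->
  csem (w_int (a_world P i)) C `<=` csem (w_int (a_world P i)) D ->
  fsat (w_val (a_world P i)) (FNeg psi).
Proof.
by move=> PM psiE sub /=; apply/negP => /psiE /(_ _ (ME_model_models_Tw i PM)).
Qed.

Lemma consequence_formula_tight {phi : lform V} :
  ME_consistent PME T -> consequence_formula T C D phi ->
  exists P : alcp_interp R NC NR V, ME_model PME T P /\ forall i,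
    csem (w_int (a_world P i)) C `<=` csem (w_int (a_world P i)) D <->
    fsat (w_val (a_world P i)) phi.
Proof.
move=> cons phiE.
have refuting v : (exists I, models_Tw T v I) ->
    exists I, models_Tw T v I /\ (csem I C `<=` csem I D -> fsat v phi).
  move=> [I IT]; have [_|nphi_v] := boolP (fsat v phi); first by exists I.
  have : ~ Tw_entails T v C D by move/phiE; apply/negP.
  by move=> /existsNP [J /not_implyP [JT nsub]]; exists J.
have [P [PM P_good]] := ME_model_choice _ cons refuting.
exists P; split=> // i; split; first exact: P_good.
exact: ME_model_subsumed.
Qed.

Lemma nonsub_consequence_formula_tight {psi : lform V} :
  ME_consistent PME T -> nonsub_consequence_formula T C D psi ->
  exists P : alcp_interp R NC NR V, ME_model PME T P /\ forall i,
    csem (w_int (a_world P i)) C `<=` csem (w_int (a_world P i)) D <->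
    fsat (w_val (a_world P i)) (FNeg psi).
Proof.
move=> cons psiE.
have confirming v : (exists I, models_Tw T v I) ->
    exists I, models_Tw T v I /\ (~~ fsat v psi -> csem I C `<=` csem I D).
  move=> [I IT]; have [_|npsi_v] := boolP (fsat v psi); first by exists I.
  have : ~ strongly_nonsubsumed T v C D by move/psiE; apply/negP.
  by move=> /existsNP [J /not_implyP [JT /contrapT sub]]; exists J.
have [P [PM P_good]] := ME_model_choice _ cons confirming.
exists P; split=> // i; split; last exact: P_good.
exact: ME_model_not_subsumed.
Qed.

End MEModels.

Theorem theorem5 (R : realType) (V : finType) (NC NR : Type)
    (KR : seq (constraint R V)) (T : tbox NC NR V) (PME : IntL V -> R)
    (C D : concept NC NR) (phi psi kappa : lform V) :
  is_ME KR PME ->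
  ME_consistent PME T ->
  consequence_formula T C D phi ->
  nonsub_consequence_formula T C D psi ->
  0 < Pf PME kappa ->
  Bs PME T C D kappa = condP PME phi kappa /\
  Bc PME T C D kappa = 1 - condP PME psi kappa.
Proof.
move=> _ cons phiE psiE kappa_gt0.
have [P1 [P1M P1_tight]] := consequence_formula_tight cons phiE.
have [P2 [P2M P2_tight]] := nonsub_consequence_formula_tight cons psiE.
split.
  apply: inf_attained.
    by exists P1; rewrite (PrCond_condP P1M.2 (fun i _ => P1_tight i)).
  move=> _ [P [PM ->]]; apply: (condP_le_PrCond PM.2) => i _.
  exact: ME_model_subsumed PM phiE.
rewrite -condP_neg ?gt_eqF //; apply: sup_attained.
  by exists P2; rewrite (PrCond_condP P2M.2 (fun i _ => P2_tight i)).
move=> _ [P [PM ->]]; apply: (PrCond_le_condP PM.2) => i _.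
exact: ME_model_not_subsumed PM psiE.
Qed.
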